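(* For every $x>0$, $$\left(\frac{\sqrt{x}+1}{2}\right)^2\ge S(\sqrt{x})\,\sqrt{x},$$ where $S$ is the Specht ratio.
   Context: The Specht ratio is $S(x)=\dfrac{x^{\frac{1}{x-1}}}{e\log x^{\frac{1}{x-1}}}$ for $x>0$, $x\neq 1$, and $S(1)=1$. *)

From Stdlib Require Import Reals.
Open Scope R_scope.

Definition specht (x : R) : R :=
  if Req_EM_T x 1 then 1
  else Rpower x (1 / (x - 1)) / (exp 1 * ln (Rpower x (1 / (x - 1)))).

From Stdlib Require Import Reals Lra.
From Coquelicot Require Import Coquelicot.
Open Scope R_scope.

(* For t > 0, t <> 1, the product S(t) t is the product of the identric mean
   I(1,t) = e^-1 t^(t/(t-1)) and the logarithmic mean L(1,t) = (t-1)/ln t.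
   Both means are bounded by the arithmetic mean (t+1)/2; each bound says that
   an explicit function vanishing at 1 is increasing on (0,+oo), which follows
   from the sign of its derivative via the mean value theorem. *)

Definition logarithmic_mean (t : R) : R := (t - 1) / ln t.

Definition identric_mean (t : R) : R := exp (t * ln t / (t - 1) - 1).

Lemma ln_le_sub_1 (y : R) : 0 < y -> ln y <= y - 1.
Proof.
  intros Hy.
  pose proof (exp_ineq1_le (ln y)) as H.
  rewrite exp_ln in H; lra.
Qed.

Lemma secant_slope_nonneg (h h' : R -> R) (a t : R) :
  0 < a -> 0 < t -> t <> a ->
  (forall c, 0 < c -> is_derive h c (h' c)) ->
  (forall c, 0 < c -> 0 <= h' c) ->
  0 <= (h t - h a) / (t - a).
Proof.
  intros Ha Ht Hta Hd Hpos.
  assert (Hmvt : forall u v, 0 < u -> u < v -> 0 <= (h v - h u) / (v - u)).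
  { intros u v Hu Huv.
    destruct (MVT_cor2 h h' u v Huv) as [c [Hc Hcuv]].
    { intros c Hc. apply is_derive_Reals, Hd. lra. }
    rewrite Hc. unfold Rdiv. rewrite Rmult_assoc, Rinv_r, Rmult_1_r by lra.
    apply Hpos. lra. }
  destruct (Rlt_or_le t a) as [Hlt | Hle].
  - replace ((h t - h a) / (t - a)) with ((h a - h t) / (a - t)) by (field; lra).
    now apply Hmvt.
  - apply Hmvt; lra.
Qed.

Lemma two_div_le_ln_div (t : R) : 0 < t -> t <> 1 ->
  2 / (t + 1) <= ln t / (t - 1).
Proof.
  intros Ht Ht1.
  pose (h u := ln u - 2 * (u - 1) / (u + 1)).
  assert (Hslope : 0 <= (h t - h 1) / (t - 1)).
  { apply (secant_slope_nonneg h (fun u => (u - 1) ^ 2 / (u * (u + 1) ^ 2)));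
      try lra.
    - intros c Hc. unfold h. auto_derive; [repeat split; lra | field; lra].
    - intros c Hc. apply Rle_mult_inv_pos; [apply pow2_ge_0 |].
      apply Rmult_lt_0_compat; [lra | apply pow_lt; lra]. }
  assert (Hh : (h t - h 1) / (t - 1) = ln t / (t - 1) - 2 / (t + 1)).
  { unfold h. rewrite ln_1. field. lra. }
  lra.
Qed.

Lemma logarithmic_mean_bounds (t : R) : 0 < t -> t <> 1 ->
  0 < logarithmic_mean t <= (t + 1) / 2.
Proof.
  intros Ht Ht1.
  pose proof (two_div_le_ln_div t Ht Ht1) as Hle.
  assert (H2 : 0 < 2 / (t + 1)) by (apply Rdiv_lt_0_compat; lra).
  assert (Hinv : logarithmic_mean t = / (ln t / (t - 1))).
  { unfold logarithmic_mean. field. split; [lra | now apply ln_neq_0]. }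
  rewrite Hinv. split.
  - apply Rinv_0_lt_compat. lra.
  - replace ((t + 1) / 2) with (/ (2 / (t + 1))) by (field; lra).
    now apply Rinv_le_contravar.
Qed.

(* The auxiliary function g is (t-1)(ln ((t+1)/2) - ln I(1,t)); its
   derivative is nonnegative because ln y <= y - 1 at y = 2c/(c+1). *)
Lemma identric_mean_le_arith (t : R) : 0 < t -> t <> 1 ->
  identric_mean t <= (t + 1) / 2.
Proof.
  intros Ht Ht1.
  pose (g u := (u - 1) * (ln ((u + 1) / 2) + 1) - u * ln u).
  assert (Hslope : 0 <= (g t - g 1) / (t - 1)).
  { apply (secant_slope_nonneg g
             (fun u => ln ((u + 1) / 2) - ln u + (u - 1) / (u + 1))); try lra.
    - intros c Hc. unfold g. auto_derive; [repeat split; lra |].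
      unfold Rdiv. field. lra.
    - intros c Hc.
      assert (Hy : 0 < 2 * c / (c + 1)) by (apply Rdiv_lt_0_compat; lra).
      pose proof (ln_le_sub_1 _ Hy) as Hln.
      rewrite ln_div, ln_mult in Hln by lra.
      rewrite ln_div by lra.
      replace (2 * c / (c + 1) - 1) with ((c - 1) / (c + 1)) in Hln
        by (field; lra).
      lra. }
  assert (Hg : (g t - g 1) / (t - 1)
               = ln ((t + 1) / 2) - (t * ln t / (t - 1) - 1)).
  { unfold g. replace ((1 + 1) / 2) with 1 by field. rewrite ln_1. field. lra. }
  unfold identric_mean.
  rewrite <- (exp_ln ((t + 1) / 2)) by lra.
  destruct (Rle_lt_or_eq_dec (t * ln t / (t - 1) - 1) (ln ((t + 1) / 2)))
    as [Hlt | Heq]; [lra | left; now apply exp_increasing | right; now f_equal].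
Qed.

Lemma specht_mul_eq (t : R) : 0 < t -> t <> 1 ->
  specht t * t = identric_mean t * logarithmic_mean t.
Proof.
  intros Ht Ht1.
  assert (Hln : ln t <> 0) by now apply ln_neq_0.
  unfold specht, identric_mean, logarithmic_mean.
  destruct (Req_EM_T t 1) as [E | _]; [contradiction |].
  set (L := ln t / (t - 1)).
  replace (Rpower t (1 / (t - 1))) with (exp L)
    by (unfold Rpower, L; f_equal; field; lra).
  replace (t * ln t / (t - 1) - 1) with (L + ln t + Ropp 1)
    by (unfold L; field; lra).
  rewrite ln_exp, !exp_plus, exp_ln, exp_Ropp by exact Ht.
  pose proof (exp_pos 1).
  unfold L. field. repeat split; lra.
Qed.

Theorem proposition2p2 (x : R) (hx : 0 < x) :
  ((sqrt x + 1) / 2) ^ 2 >= specht (sqrt x) * sqrt x.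
Proof.
  assert (Ht : 0 < sqrt x) by (apply sqrt_lt_R0; lra).
  set (t := sqrt x) in *. clearbody t.
  destruct (Req_EM_T t 1) as [E | Ht1].
  { subst t. unfold specht. destruct (Req_EM_T 1 1); [lra | contradiction]. }
  rewrite specht_mul_eq by assumption.
  pose proof (logarithmic_mean_bounds t Ht Ht1) as [Hl0 Hl].
  pose proof (identric_mean_le_arith t Ht Ht1) as Hi.
  pose proof (exp_pos (t * ln t / (t - 1) - 1)) as Hi0.
  unfold identric_mean in Hi |- *.
  apply Rle_ge. replace (((t + 1) / 2) ^ 2) with ((t + 1) / 2 * ((t + 1) / 2))
    by ring.
  apply Rmult_le_compat; lra.
Qed.
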